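(* Let $\mathfrak g$ be a finite-dimensional complex simple Lie algebra with invariant form $\langle\cdot,\cdot\rangle$, let $s,x\in\mathfrak g$ with $s$ semisimple, $x$ nilpotent and $[s,x]=0$, and write $\mathfrak g=\bigoplus_r\mathfrak g_r$ for the eigenspace decomposition of $\mathrm{ad}_s$. Let $\hat{\mathfrak g}_{g}$ be the Lie algebra with basis-linear generators $a^g_m$ ($a\in\mathfrak g_r$, $m\in r+\mathbb Z$, linear in $a$) and a central element $K$, with bracket $$[a^g_m,b^g_n]=[a,b]^g_{m+n}+\delta_{m,-n}\,\langle [x,a]+m a,\,b\rangle\,K\qquad(a\in\mathfrak g_{r_a},\ b\in\mathfrak g_{r_b}),$$ and let $\hat{\mathfrak g}=\mathfrak g\otimes\mathbb C[t,t^{-1}]\oplus\mathbb CK$ with $[a_m,b_n]=[a,b]_{m+n}+m\delta_{m,-n}\langle a,b\rangle K$ (where $a_m=a\otimes t^m$). Define $\eta(a)=\langle s+x,a\rangle K$. Then the linear map $$f:\hat{\mathfrak g}_g\to\hat{\mathfrak g},\qquad f(a^g_m)=a_{m-r}-\delta_{m,r}\,\eta(a)\quad(a\in\mathfrak g_r,\ m\in r+\mathbb Z),\qquad f(K)=K,$$ is an isomorphism of Lie algebras.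
   Context: $\hat{\mathfrak g}_g$ is the $g$-twisted mode algebra of the affine vertex algebra for the inner automorphism $g=e^{-2\pi i(s+x)}$ (acting via $\mathrm{ad}$). Here $[a,b]\in\mathfrak g_{r_a+r_b}$, so $[a,b]^g_{m+n}$ is a well-defined generator. *)

From HB Require Import structures.
From mathcomp Require Import all_boot all_order all_algebra.
From mathcomp Require Import finmap.
From mathcomp Require Export complex.
From mathcomp Require Export reals.

Set Implicit Arguments.
Unset Strict Implicit.
Unset Printing Implicit Defensive.

Import Order.TTheory GRing.Theory Num.Theory.
Local Open Scope ring_scope.

Section LieDefs.
Variables (C : fieldType) (V : vectType C).

Definition bilinear_br (br : V -> V -> V) :=
  (forall c a b1 b2, br a (c *: b1 + b2) = c *: br a b1 + br a b2) /\
  (forall c a1 a2 b, br (c *: a1 + a2) b = c *: br a1 b + br a2 b).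

Definition is_lie (br : V -> V -> V) :=
  [/\ bilinear_br br, (forall a, br a a = 0) &
      (forall a b c, br a (br b c) + br b (br c a) + br c (br a b) = 0)].

Definition lie_ideal (br : V -> V -> V) (I : {vspace V}) :=
  forall a b, b \in I -> br a b \in I.

Definition simple_lie (br : V -> V -> V) :=
  [/\ is_lie br, (exists a b, br a b != 0) &
      (forall I : {vspace V}, lie_ideal br I -> I = 0%VS \/ I = fullv)].

Definition invariant_form (br : V -> V -> V) (form : V -> V -> C) :=
  [/\ (forall c a b1 b2, form a (c *: b1 + b2) = c * form a b1 + form a b2),
      (forall a b, form a b = form b a),
      (forall a b c, form (br a b) c = form a (br b c)) &
      (forall a, (forall b, form a b = 0) -> a = 0)].

Definition ad_semisimple (br : V -> V -> V) (s : V) :=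
  exists e : seq V, basis_of fullv e /\
    forall v, v \in e -> exists r : C, br s v = r *: v.

Definition ad_nilpotent (br : V -> V -> V) (x : V) :=
  exists k : nat, forall a, iter k (br x) a = 0.

Definition fs_add (K : choiceType) (u v : {fsfun K -> V with 0}) : {fsfun K -> V with 0} :=
  [fsfun k in (finsupp u `|` finsupp v)%fset => u k + v k].

Definition fs_scale (K : choiceType) (c : C) (u : {fsfun K -> V with 0}) : {fsfun K -> V with 0} :=
  [fsfun k in finsupp u => c *: u k].

(** ----- the affine algebra  ghat = g (x) C[t,t^-1] (+) C K -----
   an element is (u, k) where u n is the coefficient of t^n, i.e.
   (u, k) = sum_n (u n)_n + k K. *)
Definition loop := ({fsfun int -> V with 0} * C)%type.

Definition loop_add (u v : loop) : loop := (fs_add u.1 v.1, u.2 + v.2).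
Definition loop_scale (c : C) (u : loop) : loop := (fs_scale c u.1, c * u.2).

(* [a_m, b_n] = [a,b]_{m+n} + m delta_{m,-n} <a,b> K, extended bilinearly; K central *)
Definition loop_br (br : V -> V -> V) (form : V -> V -> C) (u v : loop) : loop :=
  ([fsfun p in [fset (i + j)%R | i in finsupp u.1, j in finsupp v.1]%fset =>
      \sum_(i <- finsupp u.1) \sum_(j <- finsupp v.1 | (i + j)%R == p)
          br (u.1 i) (v.1 j)],
   \sum_(i <- finsupp u.1) \sum_(j <- finsupp v.1 | (i + j)%R == 0)
          i%:~R * form (u.1 i) (v.1 j)).

(** An element is (u, k) where
   u : C * int -> g is finitely supported, and u (r, n) is the component in
   g_r of mode m = r + n, i.e. (u, k) = sum_{(r,n)} (u (r,n))^g_{r+n} + k K;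
   it is required (twisted_ok) that u (r,n) lies in g_r = ker (ad_s - r). *)
Definition twisted := ({fsfun (C * int)%type -> V with 0} * C)%type.

Definition eig (br : V -> V -> V) (s : V) (r : C) (a : V) := br s a = r *: a.

Definition twisted_ok (br : V -> V -> V) (s : V) (u : twisted) :=
  forall (r : C) (n : int), eig br s r (u.1 (r, n)).

Definition tw_add (u v : twisted) : twisted := (fs_add u.1 v.1, u.2 + v.2).
Definition tw_scale (c : C) (u : twisted) : twisted := (fs_scale c u.1, c * u.2).

Definition mode (p : (C * int)%type) : C := p.1 + p.2%:~R.

(* [a^g_m, b^g_n] = [a,b]^g_{m+n} + delta_{m,-n} <[x,a] + m a, b> K,
   a in g_{r_a}, b in g_{r_b}; [a,b] in g_{r_a+r_b}; extended bilinearly *)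
Definition tw_br (br : V -> V -> V) (form : V -> V -> C) (x : V) (u v : twisted) : twisted :=
  ([fsfun q in [fset ((p.1 + p'.1)%R, (p.2 + p'.2)%R) | p in finsupp u.1, p' in finsupp v.1]%fset =>
      \sum_(p <- finsupp u.1) \sum_(p' <- finsupp v.1 |
              ((p.1 + p'.1)%R, (p.2 + p'.2)%R) == q)
          br (u.1 p) (v.1 p')],
   \sum_(p <- finsupp u.1) \sum_(p' <- finsupp v.1 | mode p + mode p' == 0)
          form (br x (u.1 p) + mode p *: u.1 p) (v.1 p')).

(* f(a^g_m) = a_{m-r} - delta_{m,r} eta(a),  eta(a) = <s + x, a> K,  f(K) = K,
   extended linearly (for the key (r,n): m - r = n, and m = r iff n = 0). *)
Definition twist_map (form : V -> V -> C) (s x : V) (u : twisted) : loop :=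
  ([fsfun n in [fset p.2 | p in finsupp u.1]%fset =>
      \sum_(p <- finsupp u.1 | p.2 == n) u.1 p],
   u.2 - \sum_(p <- finsupp u.1 | p.2 == 0%R) form (s + x) (u.1 p)).

Definition lie_iso_twisted (br : V -> V -> V) (form : V -> V -> C) (s x : V)
    (f : twisted -> loop) :=
  [/\ (forall u v, twisted_ok br s u -> twisted_ok br s v ->
         f (tw_add u v) = loop_add (f u) (f v)),
      (forall c u, twisted_ok br s u -> f (tw_scale c u) = loop_scale c (f u)),
      (forall u v, twisted_ok br s u -> twisted_ok br s v ->
         f (tw_br br form x u v) = loop_br br form (f u) (f v)),
      (forall u v, twisted_ok br s u -> twisted_ok br s v -> f u = f v -> u = v) &
      (forall w : loop, exists2 u, twisted_ok br s u & f u = w)].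

End LieDefs.

(* Both algebras are spanned by homogeneous elements and every map in sight is (bi)linear, so it
   suffices to compare brackets of a in g_r at key (r, n) (mode m = r + n) and b in g_r' at key
   (r', n').  The loop parts agree because f shifts each mode by the eigenvalue, and eigenvalues
   add under the bracket.  For the central parts, invariance of the form under ad_s makes g_r and
   g_r' orthogonal unless r + r' = 0, and in that case <[x,a] + m a, b> - <s + x, [a,b]> = n <a,b>.
   Injectivity is the independence of eigenvectors for distinct eigenvalues, surjectivity the
   decomposition of g along an ad_s-eigenbasis.  Everything works over any field of
   characteristic 0. *)

From HB Require Import structures.
From mathcomp Require Import all_boot all_order all_algebra.
From mathcomp Require Import finmap complex reals.
From mathcomp Require Import ring.
Set Implicit Arguments. Unset Strict Implicit.
Import Order.TTheory GRing.Theory Num.Theory.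
Local Open Scope ring_scope.

Lemma big_pred1_seq (I : eqType) (M : nmodType) (r : seq I) (i0 : I) (F : I -> M) :
  uniq r -> (i0 \notin r -> F i0 = 0) -> \sum_(i <- r | i == i0) F i = F i0.
Proof.
move=> ur Fi0; have [i0r|i0Nr] := boolP (i0 \in r); last first.
  by rewrite Fi0 // big1_seq // => i /andP[/eqP-> i0r]; rewrite i0r in i0Nr.
rewrite (big_rem i0) //= eqxx big1_seq ?addr0 // => i /andP[/eqP-> ].
by rewrite mem_rem_uniqF.
Qed.

Lemma partition_big_seq (I J : eqType) (M : nmodType) (r : seq I) (s : seq J)
    (p : I -> J) (Q : pred J) (F : I -> M) :
  uniq s -> {in r, forall i, p i \in s} ->
  \sum_(j <- s | Q j) \sum_(i <- r | p i == j) F i = \sum_(i <- r | Q (p i)) F i.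
Proof.
move=> us prs; rewrite (exchange_big_dep xpredT) //= [RHS]big_mkcond /=.
apply: eq_big_seq => i ri; have [Qpi|NQpi] := boolP (Q (p i)).
  rewrite (eq_bigl (fun j => j == p i)) ?big_pred1_seq ?prs // => j /=.
  by apply/idP/idP => [/andP[_ /eqP<-] //|/eqP->]; rewrite Qpi eqxx.
by rewrite big1 // => j /andP[Qj /eqP pij]; rewrite pij Qj in NQpi.
Qed.

Lemma big_finsupp_incl (K : choiceType) (V M : nmodType) (f : {fsfun K -> V with 0})
    (S : {fset K}) (P : pred K) (G : K -> V -> M) :
  (finsupp f `<=` S)%fset -> (forall k, G k 0 = 0) ->
  \sum_(k <- finsupp f | P k) G k (f k) = \sum_(k <- S | P k) G k (f k).
Proof.
move=> fS G0; rewrite big_mkcond [RHS]big_mkcond.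
apply: big_fset_incl fS _ => k _; rewrite memNfinsupp => /eqP->.
by rewrite G0; case: ifP.
Qed.

Lemma finsupp_fsfun_sub (K : choiceType) (V : nmodType) (S : {fset K}) (F : K -> V) :
  (finsupp ([fsfun k in S => F k] : {fsfun K -> V with 0}) `<=` S)%fset.
Proof. exact: finsupp_sub. Qed.

Section LieAlgebra.
Variables (C : fieldType) (V : vectType C) (br : V -> V -> V) (form : V -> V -> C).
Hypotheses (lie : is_lie br) (invf : invariant_form br form).

Lemma fs_addE (K : choiceType) (u v : {fsfun K -> V with 0}) k :
  fs_add u v k = u k + v k.
Proof.
rewrite /fs_add fsfun_fun in_fsetU !mem_finsupp; case: ifP => // /negbT.
by rewrite negb_or !negbK => /andP[/eqP-> /eqP->]; rewrite addr0.
Qed.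

Lemma fs_scaleE (K : choiceType) c (u : {fsfun K -> V with 0}) k :
  fs_scale c u k = c *: u k.
Proof.
rewrite /fs_scale fsfun_fun mem_finsupp; case: ifP => // /negbT.
by rewrite negbK => /eqP->; rewrite scaler0.
Qed.

Lemma brDr a b c : br a (b + c) = br a b + br a c.
Proof. by case: lie => -[brlin _] _ _; have := brlin 1 a b c; rewrite !scale1r. Qed.

Lemma brDl a b c : br (a + b) c = br a c + br b c.
Proof. by case: lie => -[_ brlin] _ _; have := brlin 1 a b c; rewrite !scale1r. Qed.

Lemma br0r a : br a 0 = 0.
Proof. by apply: (addrI (br a 0)); rewrite -brDr !addr0. Qed.

Lemma br0l a : br 0 a = 0.
Proof. by apply: (addrI (br 0 a)); rewrite -brDl !addr0. Qed.

Lemma brZr a c b : br a (c *: b) = c *: br a b.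
Proof. by case: lie => -[brlin _] _ _; have := brlin c a b 0; rewrite !addr0 br0r addr0. Qed.

Lemma br_sumr a (I : Type) (r : seq I) (P : pred I) (F : I -> V) :
  br a (\sum_(i <- r | P i) F i) = \sum_(i <- r | P i) br a (F i).
Proof. exact: (big_morph _ (brDr a) (br0r a)). Qed.

Lemma brNC a b : br a b = - br b a.
Proof.
case: lie => _ br_alt _; apply/eqP; rewrite -addr_eq0.
by have := br_alt (a + b); rewrite brDl !brDr !br_alt add0r addr0 => ->.
Qed.

Lemma formDr a b c : form a (b + c) = form a b + form a c.
Proof. by case: invf => formlin _ _ _; have := formlin 1 a b c; rewrite scale1r mul1r. Qed.

Lemma form0r a : form a 0 = 0.
Proof. by apply: (addrI (form a 0)); rewrite -formDr !addr0. Qed.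

Lemma formZr a c b : form a (c *: b) = c * form a b.
Proof. by case: invf => formlin _ _ _; have := formlin c a b 0; rewrite !addr0 form0r addr0. Qed.

Lemma formC a b : form a b = form b a.
Proof. by case: invf. Qed.

Lemma formDl a b c : form (a + b) c = form a c + form b c.
Proof. by rewrite formC formDr !(formC c). Qed.

Lemma formZl a c b : form (c *: a) b = c * form a b.
Proof. by rewrite formC formZr formC. Qed.

Lemma form0l a : form 0 a = 0.
Proof. by rewrite formC form0r. Qed.

Lemma form_br a b c : form (br a b) c = form a (br b c).
Proof. by case: invf. Qed.

Hypothesis char0 : has_pchar0 C.

Lemma intr_eq0_pchar0 (n : int) : (n%:~R == 0 :> C) = (n == 0).
Proof.
have natr_eq0 := (pcharf0P C).1 char0.
by case: n => k; rewrite ?NegzE ?mulrNz ?oppr_eq0 -pmulrn natr_eq0.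
Qed.

Variable s : V.

Lemma eig0 r : eig br s r 0.
Proof. by rewrite /eig br0r scaler0. Qed.

Lemma eigB r a b : eig br s r a -> eig br s r b -> eig br s r (a - b).
Proof.
move=> ea eb; rewrite /eig brDr -scaleN1r brZr eb ea.
by rewrite scalerDr !scalerA mulrC.
Qed.

(* By the Jacobi identity, ad_x commutes with ad_s. *)
Lemma eig_br_comm x r a : br s x = 0 -> eig br s r a -> eig br s r (br x a).
Proof.
move=> sx ea; case: lie => _ _ jacobi.
have := jacobi s x a; rewrite sx br0r addr0 (brNC a s) ea -scaleNr brZr => /eqP.
by rewrite scaleNr addr_eq0 opprK => /eqP.
Qed.

Lemma form_eig_eq0 r r' a b : eig br s r a -> eig br s r' b -> r + r' != 0 ->
  form a b = 0.
Proof.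
move=> ea eb rr'; have : (r + r') * form a b = 0.
  rewrite mulrDl -formZl -formZr -ea -eb -[form a (br s b)]form_br (brNC a s).
  by rewrite -scaleN1r formZl mulN1r subrr.
by move/eqP; rewrite mulf_eq0 (negPf rr') => /eqP.
Qed.

Lemma sum_eig_eq0 (I : eqType) (rho : I -> C) (l : seq I) (a : I -> V) :
    uniq (map rho l) -> (forall i, i \in l -> eig br s (rho i) (a i)) ->
  \sum_(i <- l) a i = 0 -> forall i, i \in l -> a i = 0.
Proof.
elim: l a => [|i0 l IH] a //= /andP[ni0 ul] ea S0.
have ea' i : i \in l -> eig br s (rho i) ((rho i - rho i0) *: a i).
  move=> il; rewrite /eig brZr (ea i) ?inE ?il ?orbT //.
  by rewrite !scalerA mulrC.
have S0' : \sum_(i <- l) (rho i - rho i0) *: a i = 0.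
  transitivity (br s (\sum_(i <- i0 :: l) a i) - rho i0 *: \sum_(i <- i0 :: l) a i).
    rewrite br_sumr scaler_sumr -sumrB big_cons (ea i0) ?inE ?eqxx // subrr add0r.
    by apply: eq_big_seq => i il; rewrite (ea i) ?inE ?il ?orbT // scalerBl.
  by rewrite S0 br0r scaler0 subrr.
have al i : i \in l -> a i = 0.
  move=> il; have /eqP := IH _ ul ea' S0' i il; rewrite scaler_eq0 subr_eq0.
  case/orP => [/eqP rhoi|/eqP //]; case/negP: ni0.
  by rewrite -rhoi; apply: map_f.
have ai0 : a i0 = 0.
  by move: S0; rewrite big_cons big1_seq ?addr0 // => i /andP[_ /al].
by move=> i; rewrite inE => /orP[/eqP -> //| /al].
Qed.

Lemma eigen_decomposition : ad_semisimple br s ->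
  exists (E : {fset C}) (proj : C -> V -> V),
    [/\ forall r v, eig br s r (proj r v), forall r, proj r 0 = 0 &
        forall v, \sum_(r <- E) proj r v = v].
Proof.
case=> e [be eig_e]; pose t := in_tuple e; pose N := size e.
pose rho (i : 'I_N) := coord t i (br s t`_i).
have brst (i : 'I_N) : br s t`_i = rho i *: t`_i.
  have [r eig_i] := eig_e _ (mem_nth 0 (ltn_ord i)).
  by rewrite /rho eig_i linearZ /= coord_free ?(basis_free be) // eqxx mulr1.
pose proj r v := \sum_(i < N | rho i == r) coord t i v *: t`_i.
exists [fset rho i | i in 'I_N]%fset, proj; split.
- move=> r v; rewrite /eig br_sumr scaler_sumr; apply: eq_bigr => i /eqP ri.
  by rewrite brZr brst ri !scalerA mulrC.
- by move=> r; rewrite /proj big1 // => i _; rewrite linear0 scale0r.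
move=> v; rewrite (partition_big_seq xpredT (fun i => coord t i v *: t`_i)) ?fset_uniq //.
  by rewrite [RHS](coord_basis (X := t) be (memvf v)).
by move=> i _; apply/imfsetP; exists i.
Qed.

Variable x : V.

Notation f := (twist_map form s x).

Lemma twist_map1E (u : twisted V) n :
  (f u).1 n = \sum_(p <- finsupp u.1 | p.2 == n) u.1 p.
Proof.
rewrite /twist_map /= fsfun_fun; case: ifP => // /negbT nS.
rewrite big1_seq // => p /andP[/eqP pn pS]; case/negP: nS; rewrite -pn.
by apply/imfsetP; exists p.
Qed.

Lemma tw_br1E (u v : twisted V) q :
  (tw_br br form x u v).1 q = \sum_(p <- finsupp u.1) \sum_(p' <- finsupp v.1 |
              ((p.1 + p'.1)%R, (p.2 + p'.2)%R) == q) br (u.1 p) (v.1 p').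
Proof.
rewrite /tw_br /= fsfun_fun; case: ifP => // /negbT nS.
rewrite big1_seq // => p /andP[_ pS]; rewrite big1_seq // => p' /andP[/eqP pn pS'].
by case/negP: nS; rewrite -pn; apply/imfset2P; exists p => //; exists p'.
Qed.

Lemma loop_br1E (u v : loop V) n :
  (loop_br br form u v).1 n = \sum_(i <- finsupp u.1) \sum_(j <- finsupp v.1 |
              (i + j)%R == n) br (u.1 i) (v.1 j).
Proof.
rewrite /loop_br /= fsfun_fun; case: ifP => // /negbT nS.
rewrite big1_seq // => i /andP[_ iS]; rewrite big1_seq // => j /andP[/eqP ijn jS].
by case/negP: nS; rewrite -ijn; apply/imfset2P; exists i => //; exists j.
Qed.

Lemma twist_mapD (u v : twisted V) : f (tw_add u v) = loop_add (f u) (f v).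
Proof.
have uS := fsubsetUl (finsupp u.1) (finsupp v.1).
have vS := fsubsetUr (finsupp u.1) (finsupp v.1).
have uvS := finsupp_fsfun_sub (finsupp u.1 `|` finsupp v.1)%fset (fun k => u.1 k + v.1 k).
congr pair.
  apply/fsfunP => n; rewrite fs_addE !twist_map1E /=.
  rewrite (big_finsupp_incl (G := fun _ y => y) _ uvS) //=.
  under eq_bigr do rewrite fs_addE.
  rewrite big_split /= -(big_finsupp_incl (G := fun _ y => y) _ uS) //.
  by rewrite -(big_finsupp_incl (G := fun _ y => y) _ vS).
rewrite /= (big_finsupp_incl (G := fun _ y => form (s + x) y) _ uvS) ?form0r //=.
under eq_bigr do rewrite fs_addE formDr.
rewrite big_split /=.
rewrite -(big_finsupp_incl (G := fun _ y => form (s + x) y) _ uS) ?form0r //.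
rewrite -(big_finsupp_incl (G := fun _ y => form (s + x) y) _ vS) ?form0r //.
by rewrite opprD addrACA.
Qed.

Lemma twist_mapZ c (u : twisted V) : f (tw_scale c u) = loop_scale c (f u).
Proof.
have cuS := finsupp_fsfun_sub (finsupp u.1) (fun k => c *: u.1 k).
congr pair.
  apply/fsfunP => n; rewrite fs_scaleE !twist_map1E /=.
  rewrite (big_finsupp_incl (G := fun _ y => y) _ cuS) //=.
  under eq_bigr do rewrite fs_scaleE.
  by rewrite -scaler_sumr.
rewrite /= (big_finsupp_incl (G := fun _ y => form (s + x) y) _ cuS) ?form0r //=.
under eq_bigr do rewrite fs_scaleE formZr.
by rewrite -mulr_sumr mulrBr.
Qed.

Lemma twist_map_inj (u v : twisted V) : twisted_ok br s u -> twisted_ok br s v ->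
  f u = f v -> u = v.
Proof.
move=> oku okv fuv; have uv1 : u.1 = v.1.
  apply/fsfunP => -[r n]; set U := (finsupp u.1 `|` finsupp v.1)%fset.
  have [rnU|rnNU] := boolP ((r, n) \in U); last first.
    move: rnNU; rewrite in_fsetU negb_or !memNfinsupp.
    by case/andP=> /eqP-> /eqP->.
  have /eqP := congr1 (fun w : loop V => w.1 n) fuv; rewrite /= !twist_map1E.
  rewrite (big_finsupp_incl (G := fun _ y => y) _ (fsubsetUl _ (finsupp v.1))) //=.
  rewrite (big_finsupp_incl (G := fun _ y => y) _ (fsubsetUr (finsupp u.1) _)) //=.
  rewrite -subr_eq0 -sumrB -big_filter => /eqP uv_n; apply/eqP; rewrite -subr_eq0.
  apply/eqP/(sum_eig_eq0 (rho := fst) _ _ uv_n); last by rewrite mem_filter eqxx.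
    rewrite map_inj_in_uniq ?filter_uniq ?fset_uniq // => -[r1 n1] [r2 n2].
    by rewrite !mem_filter => /andP[/eqP/= -> _] /andP[/eqP/= -> _] /= ->.
  by move=> [r' n'] _; apply: eigB; [apply: oku | apply: okv].
have uv2 : u.2 = v.2 by have := congr1 snd fuv; rewrite /= uv1; apply: addIr.
by case: u v uv1 uv2 {oku okv fuv} => [u1 u2] [v1 v2] /= -> ->.
Qed.

Lemma twist_map_surj : ad_semisimple br s ->
  forall w : loop V, exists2 u, twisted_ok br s u & f u = w.
Proof.
move=> /eigen_decomposition[E [proj [eig_proj proj0 sum_proj]]] [w1 k].
pose D := [fset ((r, n) : (C * int)%type) | r : C in E, n : int in finsupp w1]%fset.
pose u1 : {fsfun (C * int)%type -> V with 0} := [fsfun q in D => proj q.1 (w1 q.2)].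
exists (u1, k + \sum_(p <- finsupp u1 | p.2 == 0) form (s + x) (u1 p)).
  by move=> r n; rewrite /= fsfun_fun; case: ifP => _; [exact: eig_proj | exact: eig0].
congr pair; last by rewrite /= addrK.
apply/fsfunP => n; rewrite twist_map1E /=.
rewrite (big_finsupp_incl (G := fun _ y => y) _ (finsupp_fsfun_sub _ _)) //=.
rewrite big_seq_cond (eq_bigr (fun p => proj p.1 (w1 p.2))); last first.
  by move=> p /andP[pD _]; rewrite fsfun_fun pD.
rewrite -big_seq_cond big_mkcond big_imfset2 /=; last by move=> [? ?] [? ?] _ _ [-> ->].
rewrite -[RHS]sum_proj; apply: eq_bigr => r _.
rewrite -big_mkcond /= big_pred1_seq ?fset_uniq //.
by rewrite memNfinsupp => /eqP ->; rewrite proj0.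
Qed.

Lemma twisted_cocycleE (p p' : (C * int)%type) a b : br s x = 0 ->
    eig br s p.1 a -> eig br s p'.1 b ->
  (if mode p + mode p' == 0 then form (br x a + mode p *: a) b else 0)
    - (if p.2 + p'.2 == 0 then form (s + x) (br a b) else 0)
  = (if p.2 + p'.2 == 0 then p.2%:~R * form a b else 0).
Proof.
case: p p' => r n [r' n'] /= sx ea eb.
have form_s : form s (br a b) = r * form a b by rewrite -form_br ea formZl.
have form_x : form x (br a b) = form (br x a) b by rewrite -form_br.
rewrite /mode /= !formDl formZl form_s form_x.
have [rr'|rr'] := eqVneq (r + r') 0.
  have -> : (r + n%:~R + (r' + n'%:~R) == 0) = (n + n' == 0).
    by rewrite addrACA rr' add0r -intrD intr_eq0_pchar0.
  by case: ifP => _; [ring | rewrite subrr].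
rewrite (form_eig_eq0 ea eb rr') (form_eig_eq0 (eig_br_comm sx ea) eb rr') !mulr0 !addr0.
by case: ifP => _; case: ifP => _; rewrite ?subrr ?subr0 ?oppr0.
Qed.

Lemma big_twist_map2 (M : nmodType) (B : int -> V -> V -> M) (P : int -> int -> bool) :
    (forall i c, {morph B i ^~ c : a b / a + b}) -> (forall i a, {morph B i a : b c / b + c}) ->
    (forall i c, B i 0 c = 0) -> (forall i a, B i a 0 = 0) -> forall u v : twisted V,
  \sum_(i <- finsupp (f u).1) \sum_(j <- finsupp (f v).1 | P i j) B i ((f u).1 i) ((f v).1 j) =
  \sum_(p <- finsupp u.1) \sum_(p' <- finsupp v.1 | P p.2 p'.2) B p.2 (u.1 p) (v.1 p').
Proof.
move=> BDl BDr B0l B0r u v.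
have B_suml i c (I : Type) (r : seq I) (Q : pred I) F :
    B i (\sum_(k <- r | Q k) F k) c = \sum_(k <- r | Q k) B i (F k) c.
  exact: (big_morph (B i ^~ c) (BDl i c) (B0l i c)).
have B_sumr i a (I : Type) (r : seq I) (Q : pred I) F :
    B i a (\sum_(k <- r | Q k) F k) = \sum_(k <- r | Q k) B i a (F k).
  exact: (big_morph (B i a) (BDr i a) (B0r i a)).
pose Iu := [fset p.2 | p in finsupp u.1]%fset.
pose Iv := [fset p.2 | p in finsupp v.1]%fset.
have in_Iu p : p \in finsupp u.1 -> p.2 \in Iu by move=> pu; apply/imfsetP; exists p.
have in_Iv p : p \in finsupp v.1 -> p.2 \in Iv by move=> pv; apply/imfsetP; exists p.
rewrite (big_finsupp_incl (G := fun i y => \sum_(j <- finsupp (f v).1 | P i j)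
  B i y ((f v).1 j)) _ (finsupp_fsfun_sub Iu _)); last by move=> i; apply: big1.
transitivity (\sum_(i <- Iu) \sum_(p <- finsupp u.1 | p.2 == i)
    \sum_(p' <- finsupp v.1 | P p.2 p'.2) B p.2 (u.1 p) (v.1 p')); last first.
  by rewrite partition_big_seq ?fset_uniq.
apply: eq_bigr => i _.
rewrite (big_finsupp_incl (G := fun j y => B i ((f u).1 i) y) _ (finsupp_fsfun_sub Iv _)) //=.
transitivity (\sum_(p <- finsupp u.1 | p.2 == i) \sum_(j <- Iv | P i j)
    \sum_(p' <- finsupp v.1 | p'.2 == j) B i (u.1 p) (v.1 p')).
  rewrite exchange_big /=; apply: eq_bigr => j _.
  by rewrite !twist_map1E B_suml; apply: eq_bigr => p _; rewrite B_sumr.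
apply: eq_bigr => p /eqP <-.
by rewrite (partition_big_seq (P p.2) (fun p' => B p.2 (u.1 p) (v.1 p'))) ?fset_uniq.
Qed.

Lemma big_tw_br_fiber (M : nmodType) (G : V -> M) n :
    {morph G : a b / a + b} -> G 0 = 0 -> forall u v : twisted V,
  \sum_(q <- finsupp (tw_br br form x u v).1 | q.2 == n) G ((tw_br br form x u v).1 q)
  = \sum_(p <- finsupp u.1) \sum_(p' <- finsupp v.1 | p.2 + p'.2 == n)
      G (br (u.1 p) (v.1 p')).
Proof.
move=> GD G0 u v; have G_sum := big_morph G GD G0.
pose key p p' := ((p.1 + p'.1)%R, (p.2 + p'.2)%R) : (C * int)%type.
pose S := [fset key p p' | p in finsupp u.1, p' in finsupp v.1]%fset.
rewrite (big_finsupp_incl (G := fun _ => G) _ (finsupp_fsfun_sub S _)) //=.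
transitivity (\sum_(q <- S | q.2 == n) \sum_(p <- finsupp u.1)
    \sum_(p' <- finsupp v.1 | key p p' == q) G (br (u.1 p) (v.1 p'))).
  by apply: eq_bigr => q _; rewrite tw_br1E !G_sum; apply: eq_bigr => p _; rewrite G_sum.
rewrite exchange_big /=; apply: eq_big_seq => p pu.
rewrite (partition_big_seq (fun q => q.2 == n) (fun p' => G (br (u.1 p) (v.1 p')))) ?fset_uniq //.
by move=> p' pv; apply/imfset2P; exists p => //; exists p'.
Qed.

Lemma twist_map_br (u v : twisted V) : br s x = 0 ->
    twisted_ok br s u -> twisted_ok br s v ->
  f (tw_br br form x u v) = loop_br br form (f u) (f v).
Proof.
move=> sx oku okv; apply: injective_projections.
  apply/fsfunP => n; rewrite twist_map1E loop_br1E.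
  rewrite (@big_tw_br_fiber _ id) // (@big_twist_map2 _ (fun=> br) (fun i j => i + j == n)) //.
  - by move=> i c a b; rewrite /= brDl.
  - by move=> i a b c; rewrite /= brDr.
  - by move=> i c; rewrite /= br0l.
  - by move=> i a; rewrite /= br0r.
rewrite /= (@big_tw_br_fiber _ (form (s + x))) ?form0r //; last exact: formDr.
rewrite (@big_twist_map2 _ (fun i a b => i%:~R * form a b) (fun i j => i + j == 0)); last 4 first.
- by move=> i c a b; rewrite formDl mulrDr.
- by move=> i a b c; rewrite formDr mulrDr.
- by move=> i c; rewrite form0l mulr0.
- by move=> i a; rewrite form0r mulr0.
rewrite -sumrB; apply: eq_bigr => p _.
rewrite big_mkcond [X in _ - X]big_mkcond [RHS]big_mkcond -sumrB.
apply: eq_bigr => -[r' n'] _; case: p => r n.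
exact: (@twisted_cocycleE (r, n) (r', n') _ _ sx (oku r n) (okv r' n')).
Qed.

End LieAlgebra.

Unset Implicit Arguments.
Local Open Scope complex_scope.

Theorem lemma2p1 (R : realType) (V : vectType R[i])
    (br : V -> V -> V) (form : V -> V -> R[i]) (s x : V) :
  simple_lie br ->
  invariant_form br form ->
  ad_semisimple br s ->
  ad_nilpotent br x ->
  br s x = 0 ->
  lie_iso_twisted br form s x (twist_map form s x).
Proof.
move=> [lie _ _] invf ss_s _ sx; split.
- by move=> u v _ _; apply: (twist_mapD invf).
- by move=> c u _; apply: (twist_mapZ invf).
- by move=> u v; apply: (twist_map_br lie invf (pchar_num _) sx).
- by move=> u v; apply: (twist_map_inj lie).
- exact: (twist_map_surj form lie x ss_s).
Qed.
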